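(* Let $E$ be a real Banach space, $K\subset E$ nonempty closed convex, $g\in\mathcal F$ totally convex on $E$ satisfying H1–H2, $Y$ a real Banach space containing a closed, convex, pointed cone $C$ with nonempty interior, and $f:E\times E\to Y$. If $T:K\to\mathcal P(K)$ (with nonempty closed convex values) is quasi $D_g$-nonexpansive, and $f(x,\cdot)$ is $C$-convex and positively lower semicontinuous for all $x\in E$, then $DS(f,T)$ is closed and convex.
   Context: $\mathcal F$: functions $g:E\to\mathbb R$ strictly convex, lower semicontinuous, Gâteaux differentiable (derivative $g'$). $D_g(x,y)=g(x)-g(y)-\langle x-y,g'(y)\rangle$; $v_g(x,t)=\inf\{D_g(y,x):\|y-x\|=t\}$; totally convex: $v_g(x,t)>0$ for all $x$, $t>0$. H1: level sets of $D_g(x,\cdot)$ bounded for all $x$; H2: $\inf_{x\in A}v_g(x,t)>0$ for all $t>0$ and bounded $A$. $\Pi^g_D(x)$ = unique minimizer of $D_g(\cdot,x)$ over nonempty closed convex $D$. $\mathrm{Fix}(T)=\{x\in K:x\in T(x)\}$; $T$ is quasi $D_g$-nonexpansive if $S(x):=\Pi^g_{T(x)}(x)$ has $\mathrm{Fix}(S)\ne\emptyset$ and $D_g(p,S(x))\le D_g(p,x)$ for $p\in\mathrm{Fix}(S)$, $x\in K$. $C^+=\{z\in Y^*:\langle y,z\rangle\ge0\ \forall y\in C\}$; $y\preceq y'$ iff $y'-y\in C$; $C$-convex: $G(tx+(1-t)y)\preceq tG(x)+(1-t)G(y)$; positively lower semicontinuous: $x\mapsto\langle G(x),z\rangle$ lower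 semicontinuous for every $z\in C^+$. $DS(f,T)=\{x\in K:x\in T(x),\ f(y,x)\in-C\ \forall y\in K\}$. *)

From HB Require Import structures.
From mathcomp Require Import all_boot all_order all_algebra.
From mathcomp Require Import all_classical all_reals all_analysis.
Set Implicit Arguments. Unset Strict Implicit. Unset Printing Implicit Defensive.
Import Order.TTheory GRing.Theory Num.Theory.
Import numFieldNormedType.Exports.
Local Open Scope classical_set_scope.
Local Open Scope ring_scope.

Section Defs.
Context {R : realType}.

Definition dual_elt {V : normedModType R} (z : V -> R) :=
  (forall (a : R) (u v : V), z (a *: u + v) = a * z u + z v) /\ continuous z.

Definition strictly_convex {V : normedModType R} (g : V -> R) :=
  forall x y (t : R), x != y -> 0 < t < 1 ->
    g (t *: x + (1 - t) *: y) < t * g x + (1 - t) * g y.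

Definition gateaux_derivative {V : normedModType R} (g : V -> R) (gd : V -> V -> R) :=
  forall x, dual_elt (gd x) /\
    forall v, (fun t : R => (g (x + t *: v) - g x) / t) @ 0^' --> gd x v.

Definition class_F {V : normedModType R} (g : V -> R) (gd : V -> V -> R) :=
  strictly_convex g /\ lower_semicontinuous (fun x => (g x)%:E) /\
  gateaux_derivative g gd.

Definition bregman {V : normedModType R} (g : V -> R) (gd : V -> V -> R) (x y : V) : R :=
  g x - g y - gd y (x - y).

(* modulus of total convexity v_g(x,t) (inf of the empty set is +oo) *)
Definition modulus_tc {V : normedModType R} (g : V -> R) (gd : V -> V -> R)
  (x : V) (t : R) : \bar R :=
  ereal_inf [set (bregman g gd y x)%:E | y in [set y | `|y - x| = t]].

Definition totally_convex {V : normedModType R} (g : V -> R) (gd : V -> V -> R) :=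
  forall x (t : R), 0 < t -> (0 < modulus_tc g gd x t)%E.

Definition bounded_set {V : normedModType R} (A : set V) :=
  exists M : R, forall x, A x -> `|x| <= M.

Definition H1 {V : normedModType R} (g : V -> R) (gd : V -> V -> R) :=
  forall x (r : R), bounded_set [set y | bregman g gd x y <= r].

Definition H2 {V : normedModType R} (g : V -> R) (gd : V -> V -> R) :=
  forall (t : R) (A : set V), 0 < t -> bounded_set A ->
    (0 < ereal_inf [set modulus_tc g gd x t | x in A])%E.

Definition is_bregman_proj {V : normedModType R} (g : V -> R) (gd : V -> V -> R)
  (D : set V) (x p : V) :=
  D p /\ forall y, D y -> bregman g gd p x <= bregman g gd y x.

Definition Fix1 {V : Type} (K : set V) (S : V -> V) := [set x | K x /\ S x = x].

Definition quasi_Dg_nonexpansive {V : normedModType R} (g : V -> R) (gd : V -> V -> R)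
  (K : set V) (T : V -> set V) :=
  exists S : V -> V,
    (forall x, K x -> is_bregman_proj g gd (T x) x (S x)) /\
    Fix1 K S !=set0 /\
    (forall p x, Fix1 K S p -> K x -> bregman g gd p (S x) <= bregman g gd p x).

Definition is_cone {W : normedModType R} (C : set W) :=
  forall (t : R) c, 0 <= t -> C c -> C (t *: c).

Definition pointed {W : normedModType R} (C : set W) :=
  forall c, C c -> C (- c) -> c = 0.

Definition dual_cone {W : normedModType R} (C : set W) : set (W -> R) :=
  [set z | dual_elt z /\ forall y, C y -> 0 <= z y].

Definition cone_le {W : normedModType R} (C : set W) (y y' : W) := C (y' - y).

Definition C_convex {V W : normedModType R} (C : set W) (G : V -> W) :=
  forall x y (t : R), 0 <= t <= 1 ->
    cone_le C (G (t *: x + (1 - t) *: y)) (t *: G x + (1 - t) *: G y).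

Definition pos_lsc {V W : normedModType R} (C : set W) (G : V -> W) :=
  forall z, dual_cone C z -> lower_semicontinuous (fun x => (z (G x))%:E).

Definition DS {V W : normedModType R} (K : set V) (C : set W) (f : V -> V -> W)
  (T : V -> set V) : set V :=
  [set x | K x /\ T x x /\ forall y, K y -> [set - c | c in C] (f y x)].

End Defs.

(* DS(f,T) is an intersection of closed convex sets.  The fixed points of T
   in K are those of the Bregman projection selector S, and quasi
   D_g-nonexpansiveness (used with x := p) identifies them with the p in K such
   that D_g(p, S x) <= D_g(p, x) for every x in K; each such condition is an
   affine inequality in p, since the difference of two Bregman distances from p
   is affine in p.  The sets {x | f(y,x) in -C} are convex by C-convexity, and
   closed because, by the Hahn-Banach theorem, the closed convex cone -C is the
   intersection of the half-spaces {w | z w <= 0}, z in C^+, whose preimages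
   under f(y,.) are closed by positive lower semicontinuity. *)

From HB Require Import structures.
From mathcomp Require Import all_boot all_order all_algebra.
From mathcomp Require Import all_classical all_reals all_analysis.
From mathcomp.algebra_tactics Require Import ring lra.
Import Order.TTheory GRing.Theory Num.Theory.
Import numFieldNormedType.Exports.
Set Implicit Arguments. Unset Strict Implicit. Unset Printing Implicit Defensive.
Local Open Scope classical_set_scope.
Local Open Scope ring_scope.

Definition lin_functional {R : numDomainType} {V : lmodType R} (z : V -> R) :=
  forall a u v, z (a *: u + v) = a * z u + z v.

Section lin_functional.
Context {R : numFieldType} {V : lmodType R} (z : V -> R).
Hypothesis zlin : lin_functional z.

Lemma lin_functional0 : z 0 = 0.
Proof.
have := zlin 1 0 0; rewrite scale1r addr0 mul1r -{1}[z 0]addr0.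
by move/addrI.
Qed.

Lemma lin_functionalD u v : z (u + v) = z u + z v.
Proof. by rewrite -{1}[u]scale1r zlin mul1r. Qed.

Lemma lin_functionalZ a u : z (a *: u) = a * z u.
Proof. by rewrite -[a *: u]addr0 zlin lin_functional0 addr0. Qed.

Lemma lin_functionalN u : z (- u) = - z u.
Proof. by rewrite -scaleN1r lin_functionalZ mulN1r. Qed.

Lemma lin_functionalB u v : z (u - v) = z u - z v.
Proof. by rewrite lin_functionalD lin_functionalN. Qed.

End lin_functional.

Section hahn_banach.
Context {R : realType} {V : lmodType R} (p : V -> R).
Hypothesis pD : forall a b, p (a + b) <= p a + p b.
Hypothesis pZ : forall t a, 0 < t -> p (t *: a) = t * p a.

(* A partial linear functional dominated by p, given by its graph; its domain
   is the first projection of G. *)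
Definition dominated_linear_graph (G : set (V * R)) :=
  [/\ G (0, 0),
      forall t a b r s, G (a, r) -> G (b, s) -> G (t *: a + b, t * r + s),
      forall a r s, G (a, r) -> G (a, s) -> r = s &
      forall a r, G (a, r) -> r <= p a].

Lemma dominated_linear_graph_bigcup (G0 : set (V * R)) (F : set (set (V * R))) :
  dominated_linear_graph G0 ->
  F `<=` [set X | dominated_linear_graph (G0 `|` X)] -> total_on F subset ->
  dominated_linear_graph (G0 `|` \bigcup_(X in F) X).
Proof.
move=> G0dlg Fdlg Ftot; set U := G0 `|` _.
have common q q' : U q -> U q' ->
    exists2 W, dominated_linear_graph W & [/\ W `<=` U, W q & W q'].
  have sub X : F X -> G0 `|` X `<=` U by move=> FX x [?|?]; [left|right; exists X].
  case=> [G0q|[X FX Xq]] [G0q'|[X' FX' Xq']].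
  - by exists G0 => //; split => // x G0x; left.
  - by exists (G0 `|` X'); [exact: Fdlg|split; [exact: sub|left|right]].
  - by exists (G0 `|` X); [exact: Fdlg|split; [exact: sub|right|left]].
  - have [XX'|X'X] := Ftot _ _ FX FX'.
      by exists (G0 `|` X'); [exact: Fdlg|split; [exact: sub|right; exact: XX'|right]].
    by exists (G0 `|` X); [exact: Fdlg|split; [exact: sub|right|right; exact: X'X]].
split.
- by left; case: G0dlg.
- move=> t a b r s Ua Ub; have [W [_ Wlin _ _] [WU Wa Wb]] := common _ _ Ua Ub.
  exact/WU/Wlin.
- move=> a r s Ua Ub; have [W [_ _ Wfun _] [_ Wa Wb]] := common _ _ Ua Ub.
  exact: Wfun Wa Wb.
- move=> a r Ua; have [W [_ _ _ Wdom] [_ Wa _]] := common _ _ Ua Ua.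
  exact: Wdom Wa.
Qed.

Lemma dominated_extension_bound (G : set (V * R)) (y : V) :
  dominated_linear_graph G ->
  exists c, forall m r, G (m, r) -> r - p (m - y) <= c /\ c <= p (m + y) - r.
Proof.
move=> [G00 Glin _ Gdom].
have gap m r m' r' : G (m, r) -> G (m', r') -> r - p (m - y) <= p (m' + y) - r'.
  move=> Gm Gm'; have := Gdom _ _ (Glin 1 _ _ _ _ Gm Gm'); rewrite scale1r mul1r.
  have := pD (m - y) (m' + y); rewrite addrACA addNr addr0; lra.
pose S := [set x | exists m r, G (m, r) /\ x = r - p (m - y)].
have Ssup : has_sup S.
  split; first by exists (0 - p (0 - y)), 0, 0.
  by exists (p (0 + y) - 0) => _ [m [r [Gm ->]]]; exact: gap.
exists (sup S) => m r Gm; split.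
- by apply: sup_upper_bound => //; exists m, r.
- by apply: ge_sup; [case: Ssup|move=> _ [m' [r' [Gm' ->]]]; exact: gap].
Qed.

Lemma dominated_extension_le (G : set (V * R)) (y : V) (c : R) m r t :
  dominated_linear_graph G ->
  (forall m r, G (m, r) -> r - p (m - y) <= c /\ c <= p (m + y) - r) ->
  G (m, r) -> r + t * c <= p (m + t *: y).
Proof.
move=> [G00 Glin _ Gdom] cbound Gm.
have Ginv s : G (s^-1 *: m, s^-1 * r).
  by have := Glin s^-1 _ _ _ _ Gm G00; rewrite !addr0.
have unscale s v : 0 < s -> p (m + s *: v) = s * p (s^-1 *: m + v).
  move=> s0; rewrite -pZ //; congr p.
  by rewrite scalerDr scalerA mulfV ?gt_eqF // scale1r.
have [t0|t0|->] := ltgtP t 0; last by rewrite scale0r mul0r !addr0; exact: Gdom.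
- have s0 : 0 < - t by rewrite oppr_gt0.
  have [lo _] := cbound _ _ (Ginv (- t)).
  have := ler_wpM2l (ltW s0) lo; rewrite mulrBr mulrA mulfV ?gt_eqF // mul1r.
  have := unscale (- t) (- y) s0; rewrite scaleNr scalerN opprK; lra.
- have [_ up] := cbound _ _ (Ginv t).
  have := ler_wpM2l (ltW t0) up; rewrite mulrBr mulrA mulfV ?gt_eqF // mul1r.
  rewrite unscale //; lra.
Qed.

Lemma dominated_linear_graph_extend (G : set (V * R)) (y : V) :
  dominated_linear_graph G -> ~ (exists r, G (y, r)) ->
  exists2 B, dominated_linear_graph B & G `<` B.
Proof.
move=> Gdlg Gy; have [c cbound] := dominated_extension_bound y Gdlg.
have [G00 Glin Gfun _] := Gdlg.
pose B := [set q | exists m r t, G (m, r) /\ q = (m + t *: y, r + t * c)].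
exists B; last first.
  split; first by move=> [m r] Gm; exists m, r, 0; rewrite scale0r mul0r !addr0.
  move=> BG; apply: Gy; exists c; apply: BG.
  by exists 0, 0, 1; rewrite scale1r mul1r !add0r.
split.
- by exists 0, 0, 0; rewrite scale0r mul0r !addr0.
- move=> t _ _ _ _ [m1 [r1 [t1 [Gm1 [-> ->]]]]] [m2 [r2 [t2 [Gm2 [-> ->]]]]].
  exists (t *: m1 + m2), (t * r1 + r2), (t * t1 + t2); split; first exact: Glin.
  by congr pair; [rewrite scalerDl scalerDr scalerA addrACA|ring].
- move=> _ _ _ [m1 [r1 [t1 [Gm1 [-> ->]]]]] [m2 [r2 [t2 [Gm2 []]]]] em ->.
  have [et|nt] := eqVneq t1 t2.
    by move: em; rewrite et => /addIr em; rewrite em in Gm1; rewrite (Gfun _ _ _ Gm1 Gm2).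
  exfalso; apply: Gy; exists ((t2 - t1)^-1 * (- r2 + r1)).
  have -> : y = (t2 - t1)^-1 *: (- m2 + m1).
    have -> : - m2 + m1 = (t2 - t1) *: y.
      by apply/eqP; rewrite scalerBl eq_sym subr_eq -addrA em addKr.
    by rewrite scalerA mulVf ?scale1r // subr_eq0 eq_sym.
  have := Glin (-1) _ _ _ _ Gm2 Gm1; rewrite scaleN1r mulN1r => Gd.
  by have := Glin (t2 - t1)^-1 _ _ _ _ Gd G00; rewrite !addr0.
- move=> _ _ [m [r [t [Gm [-> ->]]]]]; exact: dominated_extension_le Gm.
Qed.

Theorem hahn_banach (G0 : set (V * R)) : dominated_linear_graph G0 ->
  exists z : V -> R, [/\ lin_functional z, forall v, z v <= p v &
    forall a r, G0 (a, r) -> z a = r].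
Proof.
move=> G0dlg.
(* Zorn is applied to the X such that G0 `|` X is admissible, so that the empty
   chain is covered. *)
have [A [Admax Amax]] := @Zorn_bigcup _ [set X | dominated_linear_graph (G0 `|` X)]
  (fun F FP Ftot => dominated_linear_graph_bigcup G0dlg FP Ftot).
set G := G0 `|` A in Admax.
have total v : exists r, G (v, r).
  apply: contrapT => Gv.
  have [B Bdlg [GB BG]] := dominated_linear_graph_extend Admax Gv.
  apply: (Amax B); last by rewrite /= setUidr // => q G0q; apply: GB; left.
  split; first by move=> q Aq; apply: GB; right.
  by move=> BA; apply: BG => q /BA Aq; right.
have [z zG] := choice total; have [_ Glin Gfun Gdom] := Admax.
exists z; split.
- by move=> a u v; exact: Gfun (zG _) (Glin _ _ _ _ _ (zG u) (zG v)).
- by move=> v; exact: Gdom (zG v).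
- by move=> a r G0a; exact: Gfun (zG a) (or_introl G0a).
Qed.

Lemma sublinear0 : p 0 = 0.
Proof. by have := @pZ 2 0; rewrite scaler0 => /(_ ltac:(lra)); lra. Qed.

Lemma dominated_linear_graph_line v :
  dominated_linear_graph [set q | exists t, q = (t *: v, t * p v)].
Proof.
split.
- by exists 0; rewrite scale0r mul0r.
- move=> t _ _ _ _ [t1 [-> ->]] [t2 [-> ->]]; exists (t * t1 + t2).
  by rewrite scalerDl scalerA mulrDl mulrA.
- move=> _ _ _ [t1 [-> ->]] [t2 [+ ->]] => /eqP.
  rewrite -subr_eq0 -scalerBl scaler_eq0 subr_eq0.
  by case/orP => /eqP ->; rewrite // sublinear0 !mulr0.
- move=> _ _ [t [-> ->]]; have [t0|t0|->] := ltgtP t 0.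
  + have := pD (t *: v) ((- t) *: v); rewrite -scalerDl subrr scale0r sublinear0.
    rewrite (@pZ (- t)) ?oppr_gt0 //; lra.
  + by rewrite pZ.
  + by rewrite scale0r mul0r sublinear0.
Qed.

Corollary hahn_banach_line v :
  exists z : V -> R, [/\ lin_functional z, forall w, z w <= p w & z v = p v].
Proof.
have [z [zlin zp zv]] := hahn_banach (dominated_linear_graph_line v).
by exists z; split => //; apply: zv; exists 1; rewrite scale1r mul1r.
Qed.

End hahn_banach.

Lemma lin_functional_le_norm_dual_elt {R : realType} {V : normedModType R}
    (z : V -> R) :
  lin_functional z -> (forall v, z v <= `|v|) -> dual_elt z.
Proof.
move=> zlin zle; split => // x; apply/cvgrPdist_lt => e e0.
apply/nbhs_ballP; exists e => // y; rewrite -ball_normE /= => xy.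
rewrite -(lin_functionalB zlin); apply: le_lt_trans xy.
have := zle (x - y); have := zle (- (x - y)); rewrite (lin_functionalN zlin) normrN.
by rewrite ler_norml; lra.
Qed.

Lemma lower_semicontinuous_closed_le {T : topologicalType} {R : realType}
    (h : T -> R) (a : R) :
  lower_semicontinuous (fun x => (h x)%:E) -> closed [set x | h x <= a].
Proof.
move=> /lower_semicontinuousP /(_ a) /open_closedC.
by congr closed; apply/seteqP; split => x /=; rewrite lte_fin leNgt => /negP.
Qed.

Local Open Scope convex_scope.

Lemma convex_cone_addr_closed {R : realType} {Y : normedModType R} (C : set Y) :
  convex_set C -> is_cone C -> forall a b, C a -> C b -> C (a + b).
Proof.
move=> Ccvx Ccone a b Ca Cb.
have h0 : (0 : R) <= 2^-1 by rewrite invr_ge0.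
have h1 : (2^-1 : R) <= 1 by rewrite invf_le1 // ler1n.
have := Ccvx a b (Itv01 h0 h1); rewrite !inE => /(_ Ca Cb) /(Ccone 2 _ (ler0n _ 2)).
rewrite scalerDr !scalerA mulfV ?pnatr_eq0 // scale1r.
by rewrite (_ : 2 * (1 - 2^-1) = 1 :> R) ?scale1r //; field.
Qed.

Local Close Scope convex_scope.

Section cone_separation.
Context {R : realType} {Y : normedModType R} (C : set Y).
Hypotheses (C0 : C 0) (CD : forall a b, C a -> C b -> C (a + b)) (Ccone : is_cone C).

Let d (a : Y) := inf [set `|a + c| | c in C].

Let d_set_nonempty a : [set `|a + c| | c in C] !=set0.
Proof. by exists `|a + 0|; exists 0. Qed.

Let d_le a c : C c -> d a <= `|a + c|.
Proof. by move=> Cc; apply: ge_inf; [exists 0 => _ [? _ <-]|exists c]. Qed.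

Let dD a b : d (a + b) <= d a + d b.
Proof.
have key c c' : C c -> C c' -> d (a + b) - `|b + c'| <= `|a + c|.
  move=> Cc Cc'; have := d_le (a + b) (CD Cc Cc'); rewrite addrACA.
  have := ler_normD (a + c) (b + c'); lra.
suff : d (a + b) - d a <= d b by lra.
apply: lb_le_inf => // _ [c' Cc' <-].
suff : d (a + b) - `|b + c'| <= d a by lra.
by apply: lb_le_inf => // _ [c Cc <-]; exact: key.
Qed.

Let dZ t a : 0 < t -> d (t *: a) = t * d a.
Proof.
move=> t0; apply/eqP; rewrite eq_le; apply/andP; split.
- rewrite -ler_pdivrMl //; apply: lb_le_inf => // _ [c Cc <-].
  have := d_le (t *: a) (Ccone (ltW t0) Cc).
  by rewrite -scalerDr normrZ gtr0_norm // ler_pdivrMl.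
- apply: lb_le_inf => // _ [c Cc <-].
  have tV : 0 <= t^-1 by rewrite invr_ge0 ltW.
  have -> : t *: a + c = t *: (a + t^-1 *: c).
    by rewrite scalerDr scalerA mulfV ?gt_eqF // scale1r.
  by rewrite normrZ gtr0_norm // ler_pM2l //; exact/d_le/Ccone.
Qed.

Let d_opp_gt0 u : closed C -> ~ C u -> 0 < d (- u).
Proof.
move=> Ccl Cu.
have : nbhs u (~` C) by apply: open_nbhs_nbhs; split => //; exact: closed_openC.
case/nbhs_ballP => e e0 uC; apply: (lt_le_trans e0); apply: lb_le_inf => // _ [c Cc <-].
rewrite addrC leNgt; apply/negP => ce; apply: (uC c) => //.
by rewrite -ball_normE /= distrC.
Qed.

Theorem cone_separation u : closed C -> ~ C u -> exists2 z, dual_cone C z & z u < 0.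
Proof.
move=> Ccl Cu; have [z [zlin zd zu]] := hahn_banach_line dD dZ (- u).
exists z; last by rewrite -[u]opprK (lin_functionalN zlin) zu oppr_lt0 d_opp_gt0.
split.
- apply: lin_functional_le_norm_dual_elt => // v.
  by apply: (le_trans (zd v)); have := d_le v C0; rewrite addr0.
- move=> c Cc; have := le_trans (zd (- c)) (d_le (- c) Cc).
  by rewrite (lin_functionalN zlin) addNr normr0 oppr_le0.
Qed.

End cone_separation.

Section opp_cone.
Context {R : realType} {Y : normedModType R} (C : set Y).
Hypotheses (Ccl : closed C) (Ccvx : convex_set C) (Ccone : is_cone C) (C0 : C 0).

Let CD := convex_cone_addr_closed Ccvx Ccone.

Lemma opp_cone_bigcap_dual :
  [set - c | c in C] = \bigcap_(z in dual_cone C) [set w | z w <= 0].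
Proof.
apply/seteqP; split => [_ [c Cc <-] z [[zlin _] zC]|w wC].
  by rewrite /= (lin_functionalN zlin) oppr_le0 zC.
apply: contrapT => Cw.
have /(cone_separation C0 CD Ccone Ccl) [z zC] : ~ C (- w).
  by move=> Cw'; apply: Cw; exists (- w); rewrite ?opprK.
have [[zlin _] _] := zC; rewrite (lin_functionalN zlin) oppr_lt0.
by have := wC z zC; rewrite /=; lra.
Qed.

Lemma closed_preimage_opp_cone {V : normedModType R} (G : V -> Y) :
  pos_lsc C G -> closed (G @^-1` [set - c | c in C]).
Proof.
move=> Glsc; rewrite opp_cone_bigcap_dual preimage_bigcap.
by apply: closed_bigI => z zC; exact: lower_semicontinuous_closed_le (Glsc z zC).
Qed.

Local Open Scope convex_scope.

Lemma convex_preimage_opp_cone {V : normedModType R} (G : V -> Y) :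
  C_convex C G -> convex_set (G @^-1` [set - c | c in C]).
Proof.
move=> Gcvx x1 x2 l; rewrite !inE => -[c1 Cc1 e1] [c2 Cc2 e2].
have t0 : 0 <= l%:num by apply: ge0.
have t1 : l%:num <= 1 by apply: le1.
set t := l%:num in t0 t1 *.
have : C (t *: G x1 + (1 - t) *: G x2 - G (x1 <| l |> x2)).
  by apply: Gcvx; rewrite t0 t1.
rewrite -e1 -e2 => Ck.
exists (t *: c1 + (1 - t) *: c2 + (t *: - c1 + (1 - t) *: - c2 - G (x1 <| l |> x2))).
  have t1' : 0 <= 1 - t by rewrite subr_ge0.
  by apply: CD => //; apply: CD; exact: Ccone.
by rewrite !scalerN -opprD addrA subrr add0r opprK.
Qed.

End opp_cone.

Section convex_set_intersection.
Context {R : numDomainType} {M : lmodType R}.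

Lemma convex_setI (A B : set (convex_lmodType M)) :
  convex_set A -> convex_set B -> convex_set (A `&` B).
Proof.
move=> Acvx Bcvx x y l; rewrite !inE => -[Ax Bx] [Ay By].
by split; [move: (Acvx x y l)|move: (Bcvx x y l)]; rewrite !inE; apply.
Qed.

Lemma convex_set_bigI {I : Type} (D : set I) (F : I -> set (convex_lmodType M)) :
  (forall i, D i -> convex_set (F i)) -> convex_set (\bigcap_(i in D) F i).
Proof.
move=> Fcvx x y l; rewrite !inE => Fx Fy i Di.
by move: (Fcvx i Di x y l); rewrite !inE; apply; [exact: Fx|exact: Fy].
Qed.

End convex_set_intersection.

Section bregman.
Context {R : realType} {E : normedModType R} (g : E -> R) (gd : E -> E -> R).
Hypothesis gd_lin : forall x, lin_functional (gd x).

Lemma bregman_self x : bregman g gd x x = 0.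
Proof. by rewrite /bregman !subrr (lin_functional0 (gd_lin x)) subr0. Qed.

Lemma bregman_le0_eq x y : totally_convex g gd -> bregman g gd y x <= 0 -> y = x.
Proof.
move=> gtc Dyx; apply: contrapT => /eqP yx.
have yx0 : 0 < `|y - x| by rewrite normr_gt0 subr_eq0.
have : (modulus_tc g gd x `|y - x|%R <= (bregman g gd y x)%:E)%E.
  by apply: ereal_inf_lbound; exists y.
by move=> /(lt_le_trans (gtc x _ yx0)); rewrite lte_fin; lra.
Qed.

Lemma bregmanB p x y : bregman g gd p y - bregman g gd p x =
  g x - g y + gd y y - gd x x + (gd x p - gd y p).
Proof. by rewrite /bregman !(lin_functionalB (gd_lin _)); ring. Qed.

Lemma closed_bregman_le x y : (forall z, continuous (gd z)) ->
  closed [set p | bregman g gd p y <= bregman g gd p x].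
Proof.
move=> gd_cont.
pose h p := g x - g y + gd y y - gd x x + (gd x p - gd y p).
have -> : [set p | bregman g gd p y <= bregman g gd p x] = h @^-1` [set r | r <= 0].
  by apply/seteqP; split => p; rewrite /= /h -bregmanB subr_le0.
have hcont : continuous h.
  by move=> p; apply: cvgD; [exact: cvg_cst|apply: cvgB; exact: gd_cont].
exact: (continuous_closedP _).1 hcont _ (@closed_le R 0).
Qed.

Local Open Scope convex_scope.

Lemma convex_bregman_le x y :
  convex_set [set p | bregman g gd p y <= bregman g gd p x].
Proof.
move=> p1 p2 l; rewrite !inE /= => D1 D2.
rewrite -subr_le0 bregmanB; rewrite -subr_le0 bregmanB in D1.
rewrite -subr_le0 bregmanB in D2.
have t0 : 0 <= l%:num by apply: ge0.
have t1 : 0 <= 1 - l%:num by rewrite subr_ge0; apply: le1.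
have := mulr_ge0_le0 t0 D1; have := mulr_ge0_le0 t1 D2.
have -> : p1 <| l |> p2 = l%:num *: p1 + (1 - l%:num) *: p2 :> E by [].
rewrite !(lin_functionalD (gd_lin _)) !(lin_functionalZ (gd_lin _)).
lra.
Qed.

End bregman.

Section bregman_projection_fixed_points.
Context {R : realType} {E : normedModType R} (g : E -> R) (gd : E -> E -> R).
Context (K : set E) (T : E -> set E) (S : E -> E).
Hypotheses (gd_lin : forall x, lin_functional (gd x)) (gtc : totally_convex g gd).
Hypothesis Sproj : forall x, K x -> is_bregman_proj g gd (T x) x (S x).

Lemma bregman_proj_fixE x : K x -> T x x <-> S x = x.
Proof.
move=> Kx; have [TSx Smin] := Sproj Kx; split => [Txx|Sx]; last by rewrite -{2}Sx.
apply: (bregman_le0_eq gtc); rewrite -(bregman_self g gd_lin x).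
exact: Smin.
Qed.

Lemma Fix1_bregmanE :
  (forall p x, Fix1 K S p -> K x -> bregman g gd p (S x) <= bregman g gd p x) ->
  Fix1 K S = K `&` \bigcap_(x in K) [set p | bregman g gd p (S x) <= bregman g gd p x].
Proof.
move=> Sq; apply/seteqP; split => [p [Kp Sp]|p [Kp Dp]].
  by split => // x Kx; apply: Sq.
split => //; apply/esym/(bregman_le0_eq gtc).
by have := Dp p Kp; rewrite /= bregman_self.
Qed.

Lemma DS_Fix1E {Y : normedModType R} (C : set Y) (f : E -> E -> Y) :
  DS K C f T = Fix1 K S `&` \bigcap_(y in K) (f y @^-1` [set - c | c in C]).
Proof.
apply/seteqP; split => [x [Kx [Txx fx]]|x [[Kx Sx] fx]].
  by split; [split => //; exact/(bregman_proj_fixE Kx)|move=> y Ky; exact: fx].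
by split => //; split; [exact/(bregman_proj_fixE Kx)|move=> y Ky; exact: fx].
Qed.

End bregman_projection_fixed_points.

Theorem proposition2p17 (R : realType) (E Y : completeNormedModType R)
  (K : set E) (g : E -> R) (gd : E -> E -> R) (C : set Y)
  (f : E -> E -> Y) (T : E -> set E) :
  K !=set0 -> closed K -> convex_set K ->
  class_F g gd -> totally_convex g gd -> H1 g gd -> H2 g gd ->
  closed C -> convex_set C -> is_cone C -> pointed C -> interior C !=set0 ->
  (forall x, K x -> T x !=set0 /\ closed (T x) /\ convex_set (T x) /\ T x `<=` K) ->
  quasi_Dg_nonexpansive g gd K T ->
  (forall x, C_convex C (f x) /\ pos_lsc C (f x)) ->
  closed (DS K C f T) /\ convex_set (DS K C f T).
Proof.
move=> _ Kcl Kcvx [_ [_ gder]] gtc _ _ Ccl Ccvx Ccone _ [c /interior_subset Cc] _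
  [S [Sproj [_ Sq]]] fhyp.
have gd_lin x : lin_functional (gd x) := (gder x).1.1.
have gd_cont x : continuous (gd x) := (gder x).1.2.
have C0 : C 0 by have := Ccone 0 _ (lexx 0) Cc; rewrite scale0r.
rewrite (DS_Fix1E gd_lin gtc Sproj) (Fix1_bregmanE gd_lin gtc Sq).
split.
- apply: closedI; first apply: closedI => //.
  + by apply: closed_bigI => x _; exact: closed_bregman_le.
  + by apply: closed_bigI => y _; exact: closed_preimage_opp_cone (fhyp y).2.
- apply: convex_setI; first apply: convex_setI => //.
  + by apply: convex_set_bigI => x _; exact: convex_bregman_le.
  + by apply: convex_set_bigI => y _; exact: convex_preimage_opp_cone (fhyp y).1.
Qed.
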